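(* Let $m\ge1$, $q=2^m$, let $n$ be even, and let $L(x)=L_k\big(x^{2^k}\big)+L_l\big(x^{2^l}\big)$, where $L_k,L_l$ are $q^2$-linear polynomials over $\mathbb F_{q^n}$ and $k,l$ are integers with $0\le k<l<2m$. Let $e=\gcd(l-k,2m)$, $a=L_k(1)$, $b=L_l(1)$ and $\delta=a^{q^2}b+ab^{q^2}$. Then $\ker(\mathrm{Tr}_2\circ L^\prime)\subseteq\ker\mathrm{Tr}$ if and only if one of the following holds: (1) $l-k=m$, $a\notin\mathbb F_{q^2}$, $\delta\ne0$ and \[\delta^q\big(a^{q^2}+a\big)+\delta\big(b^{q^3}+b^q\big)=\delta^q\big(b^{q^2}+b\big)+\delta\big(a^{q^3}+a^q\big)=0;\] (2) $a,b\in\mathbb F_{q^2}$ and $a^{\frac{q^2-1}{2^e-1}}\ne b^{\frac{q^2-1}{2^e-1}}$; (3) $e$ divides $m$, $a,b\in\mathbb F_{q^2}^*$ and $a^{\frac{2^{l-k}(q-1)}{2^e-1}}=b^{\frac{q-1}{2^e-1}}$.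
   Context: $\mathrm{Tr}$ denotes the trace map of $\mathbb F_{q^n}$ over $\mathbb F_q$ and $\mathrm{Tr}_2$ the trace map of $\mathbb F_{q^n}$ over $\mathbb F_{q^2}$. A $q^2$-linear polynomial over $\mathbb F_{q^n}$ has the form $\sum_{j=0}^{n/2-1}c_jx^{q^{2j}}$ with $c_j\in\mathbb F_{q^n}$. For a $2$-linear polynomial $L(x)=\sum_{j=0}^{mn-1}a_jx^{2^j}$ over $\mathbb F_{q^n}$, its adjoint is $L^\prime(x)=\sum_j(a_jx)^{2^{-j}}$, where $y\mapsto y^{2^{-j}}$ is the inverse of $y\mapsto y^{2^j}$ on $\mathbb F_{q^n}$. Polynomials are regarded as maps on $\mathbb F_{q^n}$; $\ker$ denotes the kernel of an additive map. *)

From mathcomp Require Import all_boot all_algebra all_field.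
Set Implicit Arguments. Unset Strict Implicit. Unset Printing Implicit Defensive.
Import GRing.Theory.
Local Open Scope ring_scope.

(* F plays the role of F_{q^n}, q = 2^m (any finite field of order 2^(m n)). *)
Section Defs.
Variable F : finFieldType.
Variables m n : nat.

Definition qq : nat := (2 ^ m)%N.

Definition Tr (x : F) : F := \sum_(i < n) x ^+ (qq ^ i).

Definition Tr2 (x : F) : F := \sum_(i < n./2) x ^+ (qq ^ (2 * i)).

Definition qlin (c : nat -> F) (y : F) : F :=
  \sum_(j < n./2) c j * y ^+ (qq ^ (2 * j)).

Definition Lpoly (ck cl : nat -> F) (k l : nat) (x : F) : F :=
  qlin ck (x ^+ (2 ^ k)) + qlin cl (x ^+ (2 ^ l)).

(* coefficient a_j of x^{2^j} in L, 0 <= j < m n, when k, l < 2m, k <> l *)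
Definition Lcoef (ck cl : nat -> F) (k l : nat) (j : nat) : F :=
  if (j %% (2 * m) == k)%N then ck (j %/ (2 * m))%N
  else if (j %% (2 * m) == l)%N then cl (j %/ (2 * m))%N
  else 0.

(* y^{2^{-j}}: the inverse of y |-> y^{2^j} on F_{q^n}, for j < m n *)
Definition frob_inv (j : nat) (y : F) : F := y ^+ (2 ^ (m * n - j)).

(* adjoint L'(x) = sum_j (a_j x)^{2^{-j}} of L = sum_{j<mn} a_j x^{2^j} *)
Definition Ladj (ck cl : nat -> F) (k l : nat) (x : F) : F :=
  \sum_(j < m * n) frob_inv j (Lcoef ck cl k l j * x).

End Defs.

From mathcomp Require Import all_boot all_algebra all_field.
From mathcomp Require Import zify ring.
Set Implicit Arguments. Unset Strict Implicit. Unset Printing Implicit Defensive.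
Import GRing.Theory.
Local Open Scope ring_scope.

(** Let [T] be the absolute trace. The form (x, y) |-> T(x y) is nondegenerate
    on every subfield, so taking orthogonal complements reverses inclusions of
    additive subgroups. Since T(L'(x) y) = T(x L(y)), the kernel of Tr_2 o L' is the
    orthogonal of L(F_{q^2}) and the kernel of Tr is the orthogonal of F_q: the
    inclusion of kernels holds iff F_q is contained in L(F_{q^2}).
    On F_{q^2} we have L(y) = a y^(2^k) + b y^(2^l), whose image is that of
    z |-> a z + b z^(2^d), d = l - k.
    - If a or b lies outside F_{q^2}, solving c = a z + b w together with its
      conjugate c = c^(q^2) (Cramer's rule) forces d = m and the two identities
      for delta, and conversely these identities produce the preimage of every c.
    - If a, b lie in F_{q^2}, the map is injective iff a^E <> b^E, with
      E = (q^2 - 1)/(2^e - 1), since the image of z |-> z^(2^d - 1) consists of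
      the E-th roots of unity. Otherwise pick a kernel element z0 <> 0 and put
      t = a z0: the image is t times the image of u |-> u + u^(2^d), which is the
      orthogonal of F_{2^e}; comparing with the orthogonal of F_q / t yields
      e | m and t in F_q, and the latter is the power relation of case (3). *)

Lemma card_by_fibres (T R : finType) (A B : {set T}) (f : T -> R) (op : T -> T -> T) :
  {in A, forall x0, injective (op x0)} ->
  {in A, forall x0, [set x in A | f x == f x0] = op x0 @: B} ->
  #|A| = (#|f @: A| * #|B|)%N.
Proof.
move=> op_inj fibreE; rewrite -sum1_card (partition_big f (mem (f @: A))); last first.
  by move=> x xA; apply: imset_f.
rewrite -sum_nat_const; apply: eq_bigr => _ /imsetP[x0 x0A ->].
by rewrite sum1_card -(card_imset B (op_inj x0 x0A)) -fibreE // cardsE.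
Qed.

Lemma dvdn_exp2_sub1 s t : (s %| t)%N -> (2 ^ s - 1 %| 2 ^ t - 1)%N.
Proof.
move=> /dvdnP[j ->]; elim: j => [|j IHj]; first by rewrite mul0n subnn dvdn0.
have X0 : (0 < 2 ^ s)%N by rewrite expn_gt0.
have Y0 : (0 < 2 ^ (j * s))%N by rewrite expn_gt0.
have -> : (2 ^ (j.+1 * s) - 1 = 2 ^ s * (2 ^ (j * s) - 1) + (2 ^ s - 1))%N.
  by rewrite mulSn expnD; move: X0 Y0; move: (2 ^ s)%N (2 ^ (j * s))%N; nia.
by rewrite dvdn_add // dvdn_mull.
Qed.

Lemma sum_ord_shift (R : nmodType) r (g : nat -> R) : g r = g 0%N ->
  \sum_(i < r) g i.+1 = \sum_(i < r) g i.
Proof.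
by case: r => [|r] gr; rewrite ?big_ord0 // big_ord_recr big_ord_recl /= gr addrC.
Qed.

(** * Subfields and traces in characteristic 2 *)

Section Char2FiniteField.
Variables (F : finFieldType) (M : nat).
Hypothesis cardF : #|F| = (2 ^ M)%N.

Lemma pchar2 : 2%N \in [pchar F].
Proof. exact: card_finPcharP cardF _. Qed.

Lemma exp2nD i (x y : F) : (x + y) ^+ (2 ^ i) = x ^+ (2 ^ i) + y ^+ (2 ^ i).
Proof. by apply: exprDn_pchar; rewrite (eq_pnat _ (pcharf_eq pchar2)) pnatX. Qed.

Lemma exp2n_add i j (x : F) : x ^+ (2 ^ (i + j)) = (x ^+ (2 ^ i)) ^+ (2 ^ j).
Proof. by rewrite expnD exprM. Qed.

Lemma exp2n0 i : (0 : F) ^+ (2 ^ i) = 0.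
Proof. by rewrite expr0n expn_eq0. Qed.

Lemma exp2n_eq0 i (x : F) : (x ^+ (2 ^ i) == 0) = (x == 0).
Proof. by rewrite expf_eq0 expn_gt0. Qed.

Lemma exp2n_sum i (I : Type) (r : seq I) (P : pred I) (f : I -> F) :
  (\sum_(j <- r | P j) f j) ^+ (2 ^ i) = \sum_(j <- r | P j) f j ^+ (2 ^ i).
Proof. exact: (big_morph _ (exp2nD i) (exp2n0 i)). Qed.

Lemma exp2n_card (x : F) : x ^+ (2 ^ M) = x.
Proof. by rewrite -cardF expf_card. Qed.

Lemma addxx (x : F) : x + x = 0.
Proof. exact: (addrr_pchar2 pchar2). Qed.

Lemma addr_eq0_pchar2 (x y : F) : (x + y == 0) = (x == y).
Proof. by rewrite addr_eq0 (oppr_pchar2 pchar2). Qed.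

Lemma eq_of_addr_eq0 (x y : F) : x + y = 0 -> x = y.
Proof. by move/eqP; rewrite addr_eq0_pchar2 => /eqP. Qed.

Definition GF N := [set x : F | x ^+ (2 ^ N) == x].

Lemma inGF N x : (x \in GF N) = (x ^+ (2 ^ N) == x).
Proof. by rewrite inE. Qed.

Lemma GF0 N : 0 \in GF N. Proof. by rewrite inGF exp2n0. Qed.
Lemma GF1 N : 1 \in GF N. Proof. by rewrite inGF expr1n. Qed.

Lemma GFD N x y : x \in GF N -> y \in GF N -> x + y \in GF N.
Proof. by rewrite !inGF exp2nD => /eqP-> /eqP->. Qed.

Lemma GFM N x y : x \in GF N -> y \in GF N -> x * y \in GF N.
Proof. by rewrite !inGF exprMn => /eqP-> /eqP->. Qed.

Lemma GFV N x : x \in GF N -> x^-1 \in GF N.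
Proof. by rewrite !inGF exprVn => /eqP->. Qed.

Lemma GFX N x i : x \in GF N -> x ^+ i \in GF N.
Proof. by rewrite !inGF -exprM mulnC exprM => /eqP->. Qed.

Lemma GF_unitE N x : x != 0 -> (x \in GF N) = (x ^+ (2 ^ N - 1) == 1).
Proof.
move=> x_neq0; rewrite inGF -[in LHS](@subnK 1 (2 ^ N)) ?expn_gt0 // exprD expr1.
by rewrite -[X in _ == X]mul1r (inj_eq (mulIf x_neq0)).
Qed.

Lemma GF_all x : x \in GF M.
Proof. by rewrite inGF exp2n_card. Qed.

Lemma GF_exp2n N x : x \in GF N -> x ^+ (2 ^ N) = x.
Proof. by rewrite inGF => /eqP. Qed.

Lemma GF_exp2nM N j x : x \in GF N -> x ^+ (2 ^ (N * j)) = x.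
Proof.
move/GF_exp2n => xN; elim: j => [|j IHj]; first by rewrite muln0 expr1.
by rewrite mulnS exp2n_add xN.
Qed.

Lemma GF_exp2n_mod N i x : x \in GF N -> x ^+ (2 ^ i) = x ^+ (2 ^ (i %% N)).
Proof. by move=> xN; rewrite {1}(divn_eq i N) exp2n_add mulnC GF_exp2nM. Qed.

Lemma GF_dvd s N x : (s %| N)%N -> x \in GF s -> x \in GF N.
Proof. by move=> /dvdnP[j ->] xs; rewrite inGF mulnC GF_exp2nM. Qed.

Lemma GF_gcd s t x : (0 < s)%N -> x \in GF s -> x \in GF t -> x \in GF (gcdn s t).
Proof.
move=> s_gt0 xs xt; have [u _ /dvdnP[c gcdE]] := Bezoutl t s_gt0.
have := GF_exp2nM c xs; rewrite mulnC -gcdE addnC exp2n_add mulnC GF_exp2nM //.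
by rewrite inGF => ->.
Qed.

Lemma leq_card_roots n (r : {poly F}) (A : {set F}) :
  (size r <= n)%N -> {in A, forall x, x ^+ n + r.[x] = 0} -> (#|A| <= n)%N.
Proof.
move=> size_r rootA; set p := 'X^n + r.
have size_p : size p = n.+1 by rewrite size_polyDl size_polyXn // ltnS.
have p_neq0 : p != 0 by rewrite -size_poly_eq0 size_p.
rewrite cardE -ltnS -size_p; apply: max_poly_roots p_neq0 _ (enum_uniq _).
by apply/allP => x; rewrite mem_enum => xA; rewrite /root hornerD hornerXn rootA.
Qed.

Lemma card_GF_leq s : (0 < s)%N -> (#|GF s| <= 2 ^ s)%N.
Proof.
move=> s_gt0; apply: (leq_card_roots (r := - 'X)).
  by rewrite size_polyN size_polyX (@leq_exp2l 2 1).
by move=> x; rewrite inGF => /eqP xs; rewrite hornerN hornerX xs subrr.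
Qed.

Definition trace s r (x : F) := \sum_(i < r) x ^+ (2 ^ (s * i)).

Lemma traceD s r x y : trace s r (x + y) = trace s r x + trace s r y.
Proof. by rewrite /trace -big_split; apply: eq_bigr => i _; rewrite exp2nD. Qed.

Lemma trace0 s r : trace s r 0 = 0.
Proof. by rewrite /trace big1 // => i _; rewrite exp2n0. Qed.

Lemma trace_sum s r (I : Type) (l : seq I) (P : pred I) (f : I -> F) :
  trace s r (\sum_(i <- l | P i) f i) = \sum_(i <- l | P i) trace s r (f i).
Proof. exact: (big_morph _ (traceD s r) (trace0 s r)). Qed.

Lemma trace_exp2n s r j x : trace s r (x ^+ (2 ^ j)) = trace s r x ^+ (2 ^ j).
Proof. by rewrite /trace exp2n_sum; apply: eq_bigr => i _; rewrite -!exp2n_add addnC. Qed.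

Lemma trace_GF s r x : x \in GF (s * r) -> trace s r x \in GF s.
Proof.
move=> xsr; rewrite inGF /trace exp2n_sum; apply/eqP.
rewrite (eq_bigr (fun i : 'I_r => x ^+ (2 ^ (s * i.+1)))); last first.
  by move=> i _; rewrite -exp2n_add mulnS addnC.
apply: (@sum_ord_shift _ r (fun i => x ^+ (2 ^ (s * i)))).
by rewrite muln0 expn0 expr1; apply/eqP; rewrite -inGF.
Qed.

Definition trace_ker s r := [set x in GF (s * r) | trace s r x == 0].

Lemma card_trace_ker s r : (0 < s)%N -> (0 < r)%N ->
  (#|trace_ker s r| <= 2 ^ (s * r.-1))%N.
Proof.
move=> s_gt0 r_gt0; apply: (leq_card_roots (r := \sum_(i < r.-1) 'X^(2 ^ (s * i)))).
  apply: leq_trans (size_sum _ _ _) _; apply/bigmax_leqP => i _.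
  by rewrite size_polyXn ltn_exp2l // ltn_mul2l s_gt0 /=.
move=> x; rewrite inE => /andP[_ /eqP <-].
rewrite /trace -[in RHS](prednK r_gt0) big_ord_recr /= addrC horner_sum.
by congr (_ + _); apply: eq_bigr => i _; rewrite hornerXn.
Qed.

Lemma card_GF_fibres s r : #|GF (s * r)| =
  (#|trace s r @: GF (s * r)| * #|trace_ker s r|)%N.
Proof.
apply: (card_by_fibres (op := +%R)) => [x0 _|x0 x0sr]; first exact: addrI.
apply/setP => x; apply/setIdP/imsetP => [[xsr /eqP trx]|[z /setIdP[zsr /eqP trz] ->]].
  exists (x + x0); last by rewrite addrC addrK_pchar2 // pchar2.
  by rewrite inE GFD //= traceD trx addxx.
by rewrite GFD // traceD trz addr0.
Qed.

Lemma trace_onto s r : (0 < s)%N -> (0 < r)%N -> #|GF (s * r)| = (2 ^ (s * r))%N ->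
  trace s r @: GF (s * r) = GF s /\ #|GF s| = (2 ^ s)%N.
Proof.
move=> s_gt0 r_gt0 card_sr.
have im_sub : trace s r @: GF (s * r) \subset GF s.
  by apply/subsetP => _ /imsetP[x xsr ->]; apply: trace_GF.
have card_im : (2 ^ s <= #|trace s r @: GF (s * r)|)%N.
  have := card_GF_fibres s r; have := card_trace_ker s_gt0 r_gt0.
  rewrite card_sr -(prednK r_gt0) mulnS expnD prednK //.
  have : (0 < 2 ^ (s * r.-1))%N by rewrite expn_gt0.
  by move: (2 ^ s)%N (2 ^ (s * r.-1))%N => *; nia.
have card_s := card_GF_leq s_gt0.
split; first by apply/eqP; rewrite eqEcard im_sub (leq_trans card_s card_im).
by apply/eqP; rewrite eqn_leq card_s (leq_trans card_im (subset_leq_card im_sub)).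
Qed.

Definition abstr N := trace 1 N.

Lemma abstrD N x y : abstr N (x + y) = abstr N x + abstr N y.
Proof. exact: traceD. Qed.

Lemma abstr0 N : abstr N 0 = 0.
Proof. exact: trace0. Qed.

Lemma abstr_sum N (I : Type) (l : seq I) (P : pred I) (f : I -> F) :
  abstr N (\sum_(i <- l | P i) f i) = \sum_(i <- l | P i) abstr N (f i).
Proof. exact: trace_sum. Qed.

Lemma abstr_GF2 N x : x \in GF N -> abstr N x \in GF 1.
Proof. by move=> xN; apply: trace_GF; rewrite mul1n. Qed.

Lemma abstr_bool N x : x \in GF N -> abstr N x = 0 \/ abstr N x = 1.
Proof.
move/abstr_GF2/GF_exp2n; rewrite expn1 expr2 => tr2.
have : abstr N x * (abstr N x - 1) == 0 by rewrite mulrBr tr2 mulr1 subrr.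
by rewrite mulf_eq0 subr_eq0 => /orP[] /eqP ->; [left|right].
Qed.

Lemma abstr_exp2n N j x : x \in GF N -> abstr N (x ^+ (2 ^ j)) = abstr N x.
Proof.
by move=> xN; rewrite /abstr trace_exp2n -[j]mul1n GF_exp2nM // abstr_GF2.
Qed.

Lemma abstr_traceMl s r x w : x \in GF (s * r) -> w \in GF (s * r) ->
  abstr (s * r) (trace s r x * w) = abstr (s * r) (x * trace s r w).
Proof.
move=> xsr wsr; rewrite /trace mulr_suml mulr_sumr !abstr_sum.
have shift (i : 'I_r) : abstr (s * r) (x ^+ (2 ^ (s * i)) * w)
    = abstr (s * r) (x * w ^+ (2 ^ (s * (r - i)))).
  rewrite -[RHS](abstr_exp2n (s * i)); last by rewrite GFM ?GFX.
  by rewrite exprMn -exp2n_add -mulnDr subnK ?(ltnW (ltn_ord i)) ?(GF_exp2n wsr).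
rewrite (eq_bigr _ (fun i _ => shift i)) (reindex_inj rev_ord_inj) /=.
rewrite (eq_bigr (fun i : 'I_r => abstr (s * r) (x * w ^+ (2 ^ (s * i.+1))))); last first.
  by move=> i _; rewrite subKn.
apply: (@sum_ord_shift _ r (fun i => abstr (s * r) (x * w ^+ (2 ^ (s * i))))).
by rewrite muln0 expn0 expr1 GF_exp2n.
Qed.

Lemma abstr_nondeg N z : (0 < N)%N -> #|GF N| = (2 ^ N)%N -> z \in GF N -> z != 0 ->
  exists2 y, y \in GF N & abstr N (z * y) = 1.
Proof.
move=> N_gt0 cardN zN z_neq0.
have card1N : #|GF (1 * N)| = (2 ^ (1 * N))%N by rewrite mul1n.
have [onto _] := trace_onto (isT : 0 < 1)%N N_gt0 card1N.
have : (1 : F) \in trace 1 N @: GF (1 * N) by rewrite onto GF1.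
case/imsetP=> y0; rewrite mul1n => y0N tr_y0.
exists (z^-1 * y0); first by rewrite GFM ?GFV.
by rewrite mulrA divff // mul1r /abstr -tr_y0.
Qed.

Lemma trace_eq0P s r z : (0 < s)%N -> (0 < r)%N -> #|GF (s * r)| = (2 ^ (s * r))%N ->
  z \in GF (s * r) ->
  trace s r z = 0 <-> {in GF s, forall y, abstr (s * r) (z * y) = 0}.
Proof.
move=> s_gt0 r_gt0 card_sr zsr; have [onto _] := trace_onto s_gt0 r_gt0 card_sr.
split=> [trz y|orth].
  by rewrite -onto => /imsetP[w wsr ->]; rewrite -abstr_traceMl // trz mul0r abstr0.
apply/eqP/negP => /negP trz_neq0.
have trz_sr : trace s r z \in GF (s * r) by apply: GF_dvd (trace_GF zsr); apply: dvdn_mulr.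
have sr_gt0 : (0 < s * r)%N by rewrite muln_gt0 s_gt0.
have [w wsr] := abstr_nondeg sr_gt0 card_sr trz_sr trz_neq0.
by rewrite abstr_traceMl // orth ?trace_GF // => /eqP; rewrite eq_sym oner_eq0.
Qed.

(** * Orthogonal complements for the trace form *)

Definition perp N (S : {set F}) :=
  [set x in GF N | [forall y in S, abstr N (x * y) == 0]].

Definition addsubgroup N (S : {set F}) :=
  [/\ S \subset GF N, 0 \in S & {in S &, forall x y, x + y \in S}].

Lemma perp_addsubgroup N S : addsubgroup N (perp N S).
Proof.
split; first by apply/subsetP => x /setIdP[].
  by rewrite inE GF0; apply/forall_inP => y _; rewrite mul0r abstr0.
move=> x y /setIdP[xN /forall_inP xS] /setIdP[yN /forall_inP yS].
rewrite inE GFD //; apply/forall_inP => z zS.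
by rewrite mulrDl abstrD (eqP (xS z zS)) (eqP (yS z zS)) addr0.
Qed.

Lemma sum_shift_eq0 (A : {set F}) (g : F -> int) y0 :
  y0 \in A -> {in A &, forall x y, x + y \in A} ->
  {in A, forall y, g (y + y0) = - g y} -> \sum_(y in A) g y = 0.
Proof.
move=> y0A addA g_shift; set sum_g := (X in X = _).
suff : sum_g = - sum_g by lia.
have memA y : (y + y0 \in A) = (y \in A).
  by apply/idP/idP => [/addA/(_ y0A)|yA]; [rewrite -addrA addxx addr0 | exact: addA].
rewrite {1}/sum_g (reindex_inj (addIr y0)) /= -sumrN (eq_bigl _ _ memA).
exact: eq_bigr.
Qed.

(* The additive character x |-> (-1)^(abstr N x); [card_perp] evaluates
   the sum of [sgn N (x * y)] over x in GF N and y in S in two ways. *)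
Definition sgn N (x : F) : int := if abstr N x == 0 then 1 else -1.

Lemma sgnD N x y : x \in GF N -> y \in GF N -> sgn N (x + y) = sgn N x * sgn N y.
Proof.
move=> xN yN; rewrite /sgn abstrD.
by case: (abstr_bool xN) => ->; case: (abstr_bool yN) => ->;
  rewrite ?addr0 ?add0r ?addxx ?eqxx ?oner_eq0.
Qed.

Lemma sum_sgn_perp N S x : addsubgroup N S -> x \in GF N ->
  \sum_(y in S) sgn N (x * y) = if x \in perp N S then (#|S| : int) else 0.
Proof.
move=> [sub_S _ addS] xN; case: ifP => [/setIdP[_ /forall_inP orth]|x_perp].
  rewrite (eq_bigr (fun _ => 1)) ?sumr_const ?natz // => y yS.
  by rewrite /sgn (eqP (orth y yS)) eqxx.
have : ~~ [forall y in S, abstr N (x * y) == 0].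
  by apply: contraFN x_perp => orth; rewrite inE xN.
rewrite negb_forall_in => /existsP[y0 /andP[y0S y0_perp]].
apply: (sum_shift_eq0 y0S addS) => y yS.
have sgn_y0 : sgn N (x * y0) = -1 by rewrite /sgn (negbTE y0_perp).
by rewrite mulrDr sgnD ?sgn_y0 ?mulrN1 // GFM // (subsetP sub_S).
Qed.

Lemma sum_sgn_GF N y : (0 < N)%N -> #|GF N| = (2 ^ N)%N -> y \in GF N ->
  \sum_(x in GF N) sgn N (x * y) = if y == 0 then (2 ^ N)%N : int else 0.
Proof.
move=> N_gt0 cardN yN; case: eqP => [->|/eqP y_neq0].
  rewrite (eq_bigr (fun _ => 1)) ?sumr_const ?cardN ?natz // => x _.
  by rewrite /sgn mulr0 abstr0 eqxx.
have [x1 x1N x1_not] := abstr_nondeg N_gt0 cardN yN y_neq0.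
apply: (sum_shift_eq0 x1N (@GFD N)) => x xN.
have sgn_x1 : sgn N (x1 * y) = -1 by rewrite /sgn mulrC x1_not oner_eq0.
by rewrite mulrDl sgnD ?sgn_x1 ?mulrN1 // GFM.
Qed.

Lemma card_perp N S : (0 < N)%N -> #|GF N| = (2 ^ N)%N -> addsubgroup N S ->
  (#|S| * #|perp N S| = 2 ^ N)%N.
Proof.
move=> N_gt0 cardN S_grp; have [sub_S S0 _] := S_grp.
pose sum2 := \sum_(x in GF N) \sum_(y in S) sgn N (x * y).
have sum_rows : sum2 = (#|perp N S| * #|S|)%N.
  rewrite /sum2 (eq_bigr _ (fun x xN => sum_sgn_perp S_grp xN)) -big_mkcondr.
  rewrite (eq_bigl (mem (perp N S))) => [|x /=]; last first.
    by apply/andP/idP => [[]//|x_perp]; split=> //; move: x_perp => /setIdP[].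
  by rewrite sumr_const -mulr_natr natz mulnC PoszM.
have sum_cols : sum2 = (2 ^ N)%N.
  rewrite /sum2 exchange_big /=.
  rewrite (eq_bigr _ (fun y yS => sum_sgn_GF N_gt0 cardN (subsetP sub_S y yS))).
  rewrite (bigD1 0) //= eqxx big1 ?addr0 // => y /andP[_ /negbTE ->].
  by [].
by apply/eqP; rewrite mulnC -eqz_nat -sum_rows sum_cols.
Qed.

Lemma perpS N (S1 S2 : {set F}) : S1 \subset S2 -> perp N S2 \subset perp N S1.
Proof.
move=> /subsetP sub12; apply/subsetP => x /setIdP[xN /forall_inP orth].
by rewrite inE xN; apply/forall_inP => y /sub12; apply: orth.
Qed.

Lemma perpK N S : (0 < N)%N -> #|GF N| = (2 ^ N)%N -> addsubgroup N S ->
  perp N (perp N S) = S.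
Proof.
move=> N_gt0 cardN S_grp; have P_grp := perp_addsubgroup N S.
have sub : S \subset perp N (perp N S).
  case: S_grp => sub_S _ _; apply/subsetP => y yS; rewrite inE (subsetP sub_S) //=.
  by apply/forall_inP => x /setIdP[_ /forall_inP orth]; rewrite mulrC orth.
apply/eqP; rewrite eq_sym eqEcard sub /=.
have perp_gt0 : (0 < #|perp N S|)%N by case: P_grp => _ P0 _; apply/card_gt0P; exists 0.
have := card_perp N_gt0 cardN P_grp; rewrite -(card_perp N_gt0 cardN S_grp) [RHS]mulnC.
by move/eqP; rewrite eqn_pmul2l // => /eqP ->.
Qed.

Lemma perp_subset N (S1 S2 : {set F}) : (0 < N)%N -> #|GF N| = (2 ^ N)%N ->
  addsubgroup N S1 -> addsubgroup N S2 ->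
  (S1 \subset S2) = (perp N S2 \subset perp N S1).
Proof.
move=> N_gt0 cardN S1_grp S2_grp; apply/idP/idP; first exact: perpS.
by move/(perpS N); rewrite !perpK.
Qed.

Lemma perp_GF_trace s r x : (0 < s)%N -> (0 < r)%N -> #|GF (s * r)| = (2 ^ (s * r))%N ->
  x \in GF (s * r) -> (x \in perp (s * r) (GF s)) = (trace s r x == 0).
Proof.
move=> s_gt0 r_gt0 card_sr xsr; have trP := trace_eq0P s_gt0 r_gt0 card_sr xsr.
rewrite inE xsr /=; apply/forall_inP/eqP => [orth|trx y ys].
  by apply/trP => y ys; apply/eqP/orth.
by apply/eqP; apply: (trP.1 trx).
Qed.

Lemma card_GF_all : #|GF M| = (2 ^ M)%N.
Proof. by rewrite -cardF; apply: eq_card => x; rewrite GF_all. Qed.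

Lemma card_GF s : (0 < s)%N -> (0 < M)%N -> (s %| M)%N -> #|GF s| = (2 ^ s)%N.
Proof.
move=> s_gt0 M_gt0 /dvdnP[r M_eq].
have r_gt0 : (0 < r)%N by move: M_gt0; rewrite M_eq muln_gt0 => /andP[].
have card_sr : #|GF (s * r)| = (2 ^ (s * r))%N by rewrite mulnC -M_eq card_GF_all.
by case: (trace_onto s_gt0 r_gt0 card_sr).
Qed.

Lemma GF_subset_dvdn s t : (0 < s)%N -> (0 < M)%N -> (s %| M)%N ->
  GF s \subset GF t -> (s %| t)%N.
Proof.
move=> s_gt0 M_gt0 sM /subsetP sub_st.
have g_gt0 : (0 < gcdn s t)%N by rewrite gcdn_gt0 s_gt0.
have sub_g : GF s \subset GF (gcdn s t).
  by apply/subsetP => x xs; apply: GF_gcd => //; apply: sub_st.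
have := leq_trans (subset_leq_card sub_g) (card_GF_leq g_gt0).
rewrite card_GF // leq_exp2l // => le_s_g.
by apply/gcdn_idPl/eqP; rewrite eqn_leq le_s_g dvdn_leq ?dvdn_gcdl.
Qed.

End Char2FiniteField.

(** * The adjoint of L *)

Lemma sum_mod_select (R : nmodType) p h k (f : nat -> R) : (k < p)%N ->
  \sum_(j < h * p) (if (j %% p == k)%N then f (j %/ p)%N else 0) = \sum_(i < h) f i.
Proof.
move=> kp; have p_gt0 : (0 < p)%N by apply: leq_ltn_trans kp.
rewrite -(big_mkord xpredT (fun j => if (j %% p == k)%N then f (j %/ p)%N else 0)).
rewrite big_nat_mul big_mkord; apply: eq_bigr => i _.
rewrite -{1}[(i * p)%N]add0n big_addn mulSn addnK big_mkord.
rewrite (eq_bigr (fun t : 'I_p => if t == k :> nat then f i else 0)) => [|t _]; last first.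
  by rewrite addnC modnMDl divnMDl // modn_small // divn_small // addn0.
by rewrite -big_mkcond (@big_ord1_eq _ _ _ (fun _ => f i)) kp.
Qed.

(* On F_{q^2}, where y^(q^2) = y, the q^2-linear L_k and L_l act as
   multiplication by a = L_k(1) and b = L_l(1). *)
Definition Lsub (R : pzSemiRingType) (a b : R) k l (y : R) := a * y ^+ (2 ^ k) + b * y ^+ (2 ^ l).

Section Adjoint.
Variables (F : finFieldType) (m h : nat).
Hypotheses (m_gt0 : (0 < m)%N) (h_gt0 : (0 < h)%N) (cardF : #|F| = (2 ^ (m * (2 * h)))%N).
Local Notation N := (m * (2 * h))%N.
Local Notation Fq2 := (GF F (2 * m)).
Local Notation Fq := (GF F m).
Local Notation at1 c := (qlin m (2 * h) c 1).

Lemma Tr_trace (x : F) : Tr m (2 * h) x = trace m (2 * h) x.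
Proof. by apply: eq_bigr => i _; rewrite /qq expnM. Qed.

Lemma Tr2_trace (x : F) : Tr2 m (2 * h) x = trace (2 * m) h x.
Proof.
rewrite /Tr2 /trace mul2n doubleK; apply: eq_bigr => i _.
by rewrite /qq -expnM mulnA (mulnC m 2).
Qed.

Lemma qlin1 (c : nat -> F) : qlin m (2 * h) c 1 = \sum_(i < h) c i.
Proof.
by rewrite /qlin mul2n doubleK; apply: eq_bigr => i _; rewrite expr1n mulr1.
Qed.

Lemma Ladj_adjoint ck cl k l (x y : F) :
  (k < 2 * m)%N -> (l < 2 * m)%N -> k != l -> y \in Fq2 ->
  abstr N (Ladj m (2 * h) ck cl k l x * y) = abstr N (x * Lsub (at1 ck) (at1 cl) k l y).
Proof.
move=> k_lt l_lt k_neq_l yq2; rewrite /Ladj mulr_suml (abstr_sum cardF).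
(* T is Frobenius invariant: T((c x)^(2^-j) y) = T(c x y^(2^j)). *)
rewrite (eq_bigr (fun j : 'I_N => abstr N (x * (Lcoef m ck cl k l j * y ^+ (2 ^ j)))));
    last first.
  move=> j _; rewrite /frob_inv -[LHS](abstr_exp2n cardF j) ?GF_all //.
  rewrite exprMn -exp2n_add subnK ?(ltnW (ltn_ord j)) // exp2n_card //.
  by congr (abstr _ _); ring.
rewrite -(abstr_sum cardF) -mulr_sumr; congr (abstr _ (x * _)).
rewrite (eq_bigr (fun j : 'I_N =>
    (if (j %% (2 * m) == k)%N then ck (j %/ (2 * m))%N else 0) * y ^+ (2 ^ k)
  + (if (j %% (2 * m) == l)%N then cl (j %/ (2 * m))%N else 0) * y ^+ (2 ^ l)));
    last first.
  move=> j _; rewrite (GF_exp2n_mod _ yq2) /Lcoef.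
  case: eqP => [->|_]; first by rewrite (negbTE k_neq_l) mul0r addr0.
  by case: eqP => [->|_]; rewrite ?mul0r ?add0r.
have -> : N = (h * (2 * m))%N by rewrite mulnCA mulnA mulnC.
by rewrite big_split /= -!mulr_suml !sum_mod_select // /Lsub !qlin1.
Qed.

Lemma LsubD (a b : F) k l x y : Lsub a b k l (x + y) = Lsub a b k l x + Lsub a b k l y.
Proof. by rewrite /Lsub !(exp2nD cardF); ring. Qed.

Lemma Lsub_image_addsubgroup (a b : F) k l : addsubgroup N (Lsub a b k l @: Fq2).
Proof.
split; first by apply/subsetP => x _; apply: GF_all cardF _.
  by apply/imsetP; exists 0; rewrite ?GF0 // /Lsub !exp2n0 !mulr0 addr0.
move=> _ _ /imsetP[x xq2 ->] /imsetP[y yq2 ->].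
by apply/imsetP; exists (x + y); rewrite ?(GFD cardF) ?LsubD.
Qed.

Lemma Tr_ker_subset_iff ck cl k l : (k < l)%N -> (l < 2 * m)%N ->
  (forall x : F, Tr2 m (2 * h) (Ladj m (2 * h) ck cl k l x) = 0 -> Tr m (2 * h) x = 0) <->
  Fq \subset Lsub (at1 ck) (at1 cl) k l @: Fq2.
Proof.
move=> lt_kl lt_l2m; have lt_k2m := ltn_trans lt_kl lt_l2m.
have neq_kl : k != l by rewrite neq_ltn lt_kl.
have N_gt0 : (0 < N)%N by rewrite !muln_gt0 m_gt0 h_gt0.
have cardN := card_GF_all cardF.
have Fq_grp : addsubgroup N Fq.
  by split; [apply/subsetP => x _; apply: GF_all cardF _ | apply: GF0 | exact: (@GFD _ _ cardF m)].
have ker_Tr x : (x \in perp N Fq) = (Tr m (2 * h) x == 0).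
  by rewrite Tr_trace (perp_GF_trace cardF) ?(GF_all cardF) // muln_gt0.
have ker_Tr2 x : (x \in perp N (Lsub (at1 ck) (at1 cl) k l @: Fq2))
    = (Tr2 m (2 * h) (Ladj m (2 * h) ck cl k l x) == 0).
  have eN : (2 * m * h = N)%N by rewrite mulnCA mulnA.
  rewrite Tr2_trace -(perp_GF_trace cardF) ?muln_gt0 ?eN ?(GF_all cardF) //.
  rewrite !inE !(exp2n_card cardF) !eqxx /=.
  apply/forall_inP/forall_inP => [orth y yq2|orth _ /imsetP[y yq2 ->]].
    by rewrite Ladj_adjoint ?orth ?imset_f.
  by rewrite -Ladj_adjoint ?orth.
rewrite (perp_subset cardF N_gt0 cardN Fq_grp (Lsub_image_addsubgroup _ _ _ _)).
split=> [ker_sub|/subsetP ker_sub x].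
  by apply/subsetP => x; rewrite ker_Tr2 ker_Tr => /eqP/ker_sub/eqP.
by move/eqP; rewrite -ker_Tr2 => /ker_sub; rewrite ker_Tr => /eqP.
Qed.

End Adjoint.

(** * The image of F_{q^2} under z |-> a z + b z^(2^d) *)

Definition Lred (R : pzSemiRingType) (a b : R) d (z : R) := a * z + b * z ^+ (2 ^ d).

Lemma Lsub_image_Lred (F : finFieldType) m (a b : F) k l : (k < l)%N -> (l < 2 * m)%N ->
  Lsub a b k l @: GF F (2 * m) = Lred a b (l - k) @: GF F (2 * m).
Proof.
move=> lt_kl lt_l2m; have le_k2m : (k <= 2 * m)%N by rewrite ltnW // (ltn_trans lt_kl).
apply/setP => x; apply/imsetP/imsetP => [[y yq2 ->]|[z zq2 ->]].
  by exists (y ^+ (2 ^ k)); rewrite ?GFX // /Lsub /Lred -exp2n_add subnKC // ltnW.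
exists (z ^+ (2 ^ (2 * m - k))); first exact: GFX.
rewrite /Lsub /Lred -!exp2n_add subnK // (GF_exp2n zq2).
rewrite (_ : 2 * m - k + l = 2 * m + (l - k))%N; last by lia.
by rewrite exp2n_add (GF_exp2n zq2).
Qed.

Section LredImage.
Variables (F : finFieldType) (M m : nat).
Hypotheses (cardF : #|F| = (2 ^ M)%N) (M_gt0 : (0 < M)%N) (m_gt0 : (0 < m)%N).
Hypothesis dvd_2m_M : (2 * m %| M)%N.
Local Notation Fq2 := (GF F (2 * m)).
Local Notation Fq := (GF F m).
Local Notation delta a b := (a ^+ (2 ^ (2 * m)) * b + a * b ^+ (2 ^ (2 * m))).

Lemma card_Fq2 : #|Fq2| = (2 ^ (2 * m))%N.
Proof. by rewrite (card_GF cardF) // muln_gt0 m_gt0. Qed.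

Lemma Fq_subset_Fq2 : Fq \subset Fq2.
Proof. by apply/subsetP => x; apply: GF_dvd; rewrite dvdn_mull. Qed.

Lemma cramer2 (a b a' b' z w c : F) : c = a * z + b * w -> c = a' * z + b' * w ->
  (a' * b + a * b') * z = c * (b' + b) /\ (a' * b + a * b') * w = c * (a' + a).
Proof.
move=> c1 c2; split; rewrite mulrDr {1}c1 {1}c2.
  rewrite [RHS](_ : _ = (a' * b + a * b') * z + (b * b' * w + b * b' * w)); last by ring.
  by rewrite (addxx cardF) addr0.
rewrite [RHS](_ : _ = (a' * b + a * b') * w + (a * a' * z + a * a' * z)); last by ring.
by rewrite (addxx cardF) addr0.
Qed.

Lemma Lred_image_solution (a b : F) d c : Fq \subset Lred a b d @: Fq2 -> c \in Fq ->
  exists2 z, z \in Fq2 & delta a b * z = c * (b ^+ (2 ^ (2 * m)) + b)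
                      /\ delta a b * z ^+ (2 ^ d) = c * (a ^+ (2 ^ (2 * m)) + a).
Proof.
move=> /subsetP sub cq; have /imsetP[z zq2 cE] := sub c cq; exists z => //.
apply: (cramer2 cE); have cq2 : c \in Fq2 by apply: (subsetP Fq_subset_Fq2).
rewrite -{1}(GF_exp2n cq2) cE (exp2nD cardF) !exprMn (GF_exp2n zq2).
by rewrite (GF_exp2n (GFX _ zq2)).
Qed.

Lemma Lred_image_notin_Fq2 (a b : F) d : ~~ ((a \in Fq2) && (b \in Fq2)) ->
  Fq \subset Lred a b d @: Fq2 -> delta a b != 0 /\ a \notin Fq2.
Proof.
move=> not_ab sub; have [z1 z1q2 [e1 e2]] := Lred_image_solution sub (GF1 _ _).
rewrite !mul1r in e1 e2.
have delta_neq0 : delta a b != 0.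
  apply: contraNneq not_ab => delta0; move: e1 e2; rewrite delta0 !mul0r !inGF.
  by move=> /esym/(eq_of_addr_eq0 cardF)-> /esym/(eq_of_addr_eq0 cardF)->; rewrite !eqxx.
split=> //; apply: contraNN not_ab => aq2; rewrite aq2 /=.
move: e2; rewrite [in X in _ = X](GF_exp2n aq2) (addxx cardF) => /eqP.
rewrite mulf_eq0 (negbTE delta_neq0) exp2n_eq0 => /eqP z10.
by move: e1; rewrite z10 mulr0 => /esym/(eq_of_addr_eq0 cardF); rewrite inGF => ->.
Qed.

Lemma Lred_image_notin_degree (a b : F) d : (0 < d)%N -> (d < 2 * m)%N ->
  ~~ ((a \in Fq2) && (b \in Fq2)) -> Fq \subset Lred a b d @: Fq2 -> d = m.
Proof.
move=> d_gt0 d_lt not_ab sub; have [delta_neq0 a_notin] := Lred_image_notin_Fq2 not_ab sub.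
have [z1 z1q2 [e1 e2]] := Lred_image_solution sub (GF1 _ _); rewrite !mul1r in e1 e2.
have A_neq0 : a ^+ (2 ^ (2 * m)) + a != 0.
  by apply: contraNneq a_notin => /(eq_of_addr_eq0 cardF) aq2; rewrite inGF aq2.
have w1_neq0 : z1 ^+ (2 ^ d) != 0.
  by apply: contraNneq A_neq0 => w0; rewrite -e2 w0 mulr0.
(* The solution for c is c z1, so every c in F_q satisfies c^(2^d) = c. *)
have Fq_sub_d : Fq \subset GF F d.
  apply/subsetP => c cq; have [z zq2 [f1 f2]] := Lred_image_solution sub cq.
  have zE : z = c * z1 by apply: (mulfI delta_neq0); rewrite f1 -e1 mulrCA.
  rewrite inGF; apply/eqP/(mulIf w1_neq0)/(mulfI delta_neq0).
  by rewrite -exprMn -zE f2 -e2 mulrCA.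
have m_dvd_M : (m %| M)%N by apply: dvdn_trans dvd_2m_M; apply: dvdn_mull.
have /dvdnP[j dE] := GF_subset_dvdn cardF m_gt0 M_gt0 m_dvd_M Fq_sub_d.
by move: d_gt0 d_lt; rewrite dE; case: j {dE} => [|[|j]]; rewrite ?mul0n ?mul1n //; nia.
Qed.

Lemma exp2n_3m (x : F) :
  x ^+ (2 ^ (3 * m)) + x ^+ (2 ^ m) = (x ^+ (2 ^ (2 * m)) + x) ^+ (2 ^ m).
Proof. by rewrite (exp2nD cardF) -exp2n_add (_ : 2 * m + m = 3 * m)%N //; lia. Qed.

Lemma Lred_image_notin (a b : F) d : (0 < d)%N -> (d < 2 * m)%N ->
  ~~ ((a \in Fq2) && (b \in Fq2)) -> Fq \subset Lred a b d @: Fq2 ->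
  [/\ d = m, a \notin Fq2, delta a b != 0,
      delta a b ^+ (2 ^ m) * (a ^+ (2 ^ (2 * m)) + a)
        + delta a b * (b ^+ (2 ^ (3 * m)) + b ^+ (2 ^ m)) = 0
    & delta a b ^+ (2 ^ m) * (b ^+ (2 ^ (2 * m)) + b)
        + delta a b * (a ^+ (2 ^ (3 * m)) + a ^+ (2 ^ m)) = 0].
Proof.
move=> d_gt0 d_lt not_ab sub; have dm := Lred_image_notin_degree d_gt0 d_lt not_ab sub.
have [delta_neq0 a_notin] := Lred_image_notin_Fq2 not_ab sub; subst d.
have [z1 z1q2 [e1 e2]] := Lred_image_solution sub (GF1 _ _); rewrite !mul1r in e1 e2.
split=> //; rewrite !exp2n_3m -e1 -e2; apply/eqP; rewrite (addr_eq0_pchar2 cardF) !exprMn.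
  by apply/eqP; ring.
by rewrite -exp2n_add addnn -mul2n (GF_exp2n z1q2); apply/eqP; ring.
Qed.

Lemma Lred_image_delta (a b : F) : delta a b != 0 ->
  delta a b ^+ (2 ^ m) * (a ^+ (2 ^ (2 * m)) + a)
    + delta a b * (b ^+ (2 ^ (3 * m)) + b ^+ (2 ^ m)) = 0 ->
  delta a b ^+ (2 ^ m) * (b ^+ (2 ^ (2 * m)) + b)
    + delta a b * (a ^+ (2 ^ (3 * m)) + a ^+ (2 ^ m)) = 0 ->
  Fq \subset Lred a b m @: Fq2.
Proof.
rewrite !exp2n_3m; set D := delta a b.
set A := a ^+ (2 ^ (2 * m)) + a; set B := b ^+ (2 ^ (2 * m)) + b.
move=> D_neq0 /(eq_of_addr_eq0 cardF) eqA /(eq_of_addr_eq0 cardF) eqB.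
have Dm_neq0 : D ^+ (2 ^ m) != 0 by rewrite expf_neq0.
have [u Du] : exists u, D * u = B by exists (B / D); rewrite mulrC divfK.
have Dum : D * u ^+ (2 ^ m) = A.
  by apply: (mulfI Dm_neq0); rewrite eqA -Du exprMn; ring.
have uq2 : u \in Fq2.
  rewrite inGF; apply/eqP/(mulfI Dm_neq0)/(mulfI D_neq0).
  rewrite mul2n -addnn exp2n_add.
  rewrite [RHS](_ : _ = D ^+ (2 ^ m) * B); last by rewrite -Du; ring.
  by rewrite eqB -Dum exprMn; ring.
have u_preim1 : Lred a b m u = 1.
  apply: (mulfI D_neq0); rewrite mulr1 /Lred mulrDr mulrCA Du mulrCA Dum /A /B /D.
  rewrite [LHS](_ : _ = delta a b + (a * b + a * b)); last by ring.
  by rewrite (addxx cardF) addr0.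
apply/subsetP => c cq; apply/imsetP; exists (c * u).
  by rewrite GFM // (subsetP Fq_subset_Fq2).
by rewrite /Lred exprMn (GF_exp2n cq) -[LHS]mulr1 -u_preim1 /Lred; ring.
Qed.

Local Notation Fq2x := [set x in Fq2 | x != 0].

Lemma card_Fq2x : #|Fq2x| = (2 ^ (2 * m) - 1)%N.
Proof.
have := cardsD1 0 Fq2; rewrite GF0 card_Fq2 add1n => ->.
by rewrite subn1 /=; apply: eq_card => x; rewrite !inE andbC.
Qed.

Lemma Fq2_exp_sub1 z : z \in Fq2 -> z != 0 -> z ^+ (2 ^ (2 * m) - 1) = 1.
Proof. by move=> zq2 z_neq0; apply/eqP; rewrite -GF_unitE. Qed.

Lemma Fq_of_exp_sub1 t : t \in Fq2 -> t != 0 -> t ^+ (2 ^ m - 1) \in Fq -> t \in Fq.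
Proof.
move=> tq2 t_neq0 uq; set u := t ^+ (2 ^ m - 1) in uq *.
(* u^(q+1) = t^(q^2-1) = 1 and u^q = u give u^2 = 1, hence u = 1. *)
have uu : u * u = 1.
  rewrite -{1}(GF_exp2n uq) -exprSr -exprM.
  have -> : ((2 ^ m - 1) * (2 ^ m).+1 = 2 ^ (2 * m) - 1)%N.
    by rewrite mul2n -addnn expnD -(addn1 (2 ^ m)) -subn_sqr exp1n mulnn.
  exact: Fq2_exp_sub1.
have : (u + 1) ^+ (2 ^ 1) = 0 by rewrite (exp2nD cardF) expn1 expr2 uu expr1n (addxx cardF).
move/eqP; rewrite expf_eq0 /= => /eqP/(eq_of_addr_eq0 cardF) u1.
by rewrite GF_unitE // -/u u1.
Qed.

Section FixedShift.
Variable d : nat.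
Hypotheses (d_gt0 : (0 < d)%N) (d_lt : (d < 2 * m)%N).
Local Notation e := (gcdn d (2 * m)).
Local Notation g := (2 ^ e - 1)%N.
Local Notation D := (2 ^ d - 1)%N.
Local Notation E := ((2 ^ (2 * m) - 1) %/ (2 ^ e - 1))%N.

Lemma g_gt0 : (0 < g)%N.
Proof. by rewrite subn_gt0 -{1}(expn0 2) ltn_exp2l // gcdn_gt0 d_gt0. Qed.

Lemma Fq2_order_factor : (2 ^ (2 * m) - 1 = E * g)%N.
Proof. by rewrite divnK // dvdn_exp2_sub1 // dvdn_gcdr. Qed.

Lemma D_factor : (D = D %/ g * g)%N.
Proof. by rewrite divnK // dvdn_exp2_sub1 // dvdn_gcdl. Qed.

Lemma E_gt0 : (0 < E)%N.
Proof.
have : (1 < 2 ^ (2 * m))%N by rewrite -{1}(expn0 2) ltn_exp2l // muln_gt0 m_gt0.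
by have := Fq2_order_factor; have := g_gt0; move: g E => *; nia.
Qed.

Lemma exp_DE z : z \in Fq2 -> z != 0 -> z ^+ (D * E) = 1.
Proof.
move=> zq2 z_neq0; rewrite D_factor -mulnA (mulnC g) -Fq2_order_factor mulnC exprM.
by rewrite Fq2_exp_sub1 // expr1n.
Qed.

Lemma exp2n_shift (z : F) : z ^+ (2 ^ d) = z ^+ D * z.
Proof. by rewrite -exprSr subn1 prednK // expn_gt0. Qed.

Lemma GF_shift z : z \in Fq2 -> z ^+ (2 ^ d) = z -> z \in GF F e.
Proof. by move=> zq2 zd; apply: GF_gcd => //; rewrite inGF zd. Qed.

Lemma powD_image : [set z ^+ D | z in Fq2x] = [set v in Fq2x | v ^+ E == 1].
Proof.
(* The kernel of z |-> z^D lies in GF e, so the image has at least E elements. *)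
set Kr := [set z in Fq2x | z ^+ D == 1].
have fibres : #|Fq2x| = (#|[set z ^+ D | z in Fq2x]| * #|Kr|)%N.
  apply: (card_by_fibres (op := *%R)) => [x0 /setIdP[_ x0_neq0]|x0 /setIdP[x0q2 x0_neq0]].
    exact: mulfI.
  apply/setP => x; apply/setIdP/imsetP => [[/setIdP[xq2 x_neq0] /eqP xD]|].
    exists (x / x0); last by rewrite mulrC divfK.
    apply/setIdP; split; first by apply/setIdP; rewrite GFM ?GFV ?mulf_neq0 ?invr_eq0.
    by rewrite exprMn xD exprVn divff // expf_neq0.
  case=> z /setIdP[/setIdP[zq2 z_neq0] /eqP zD] ->.
  split; first by apply/setIdP; rewrite GFM ?mulf_neq0.
  by rewrite exprMn zD mulr1.
have card_Kr : (#|Kr| <= g)%N.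
  apply: (leq_card_roots (r := -1)); first by rewrite size_polyN size_poly1 g_gt0.
  move=> z /setIdP[/setIdP[zq2 z_neq0] /eqP zD].
  have ze : z \in GF F e by apply: GF_shift; rewrite // exp2n_shift zD mul1r.
  by move: ze; rewrite GF_unitE // => /eqP ->; rewrite hornerN hornerC subrr.
have im_sub : [set z ^+ D | z in Fq2x] \subset [set v in Fq2x | v ^+ E == 1].
  apply/subsetP => _ /imsetP[z zx ->]; have /setIdP[zq2 z_neq0] := zx.
  apply/setIdP; split; first by apply/setIdP; rewrite GFX ?expf_neq0.
  by rewrite -exprM exp_DE.
apply/eqP; rewrite eqEcard im_sub /=.
apply: leq_trans (_ : E <= _)%N.
  apply: (leq_card_roots (r := -1)); first by rewrite size_polyN size_poly1 E_gt0.
  by move=> v /setIdP[_ /eqP ->]; rewrite hornerN hornerC subrr.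
move: fibres card_Kr; rewrite card_Fq2x Fq2_order_factor.
by have := g_gt0; move: #|Kr| #|[set _ | _ in _]| g => *; nia.
Qed.

Lemma LredD (a b x y : F) : Lred a b d (x + y) = Lred a b d x + Lred a b d y.
Proof. by rewrite /Lred (exp2nD cardF); ring. Qed.

Lemma Lred_image_inj (a b : F) : a \in Fq2 -> b \in Fq2 ->
  {in Fq2, forall z, Lred a b d z = 0 -> z = 0} -> Fq \subset Lred a b d @: Fq2.
Proof.
move=> aq2 bq2 ker0.
have im_sub : Lred a b d @: Fq2 \subset Fq2.
  by apply/subsetP => _ /imsetP[z zq2 ->]; rewrite (GFD cardF) ?GFM ?GFX.
have card_im : #|Lred a b d @: Fq2| = #|Fq2|.
  apply: card_in_imset => x y xq2 yq2 Lxy; apply: (eq_of_addr_eq0 cardF).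
  by apply: ker0; rewrite ?(GFD cardF) // LredD Lxy (addxx cardF).
have -> : Lred a b d @: Fq2 = Fq2 by apply/eqP; rewrite eqEcard im_sub card_im leqnn.
exact: Fq_subset_Fq2.
Qed.

Lemma Lred_injective_iff (a b : F) : a \in Fq2 -> b \in Fq2 ->
  {in Fq2, forall z, Lred a b d z = 0 -> z = 0} <-> a ^+ E != b ^+ E.
Proof.
move=> aq2 bq2; have zeroE : (0 : F) ^+ E = 0 by rewrite expr0n gtn_eqF // E_gt0.
split=> [ker0|aE_neq z zq2 /(eq_of_addr_eq0 cardF) az].
  apply/eqP => aE_eq.
  have [a0|a_neq0] := eqVneq a 0.
    move: aE_eq; rewrite a0 zeroE => /esym/eqP; rewrite expf_eq0 E_gt0 /= => /eqP b0.
    have := ker0 1 (GF1 _ _); rewrite /Lred a0 b0 !mul0r addr0 => /(_ erefl)/eqP.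
    by rewrite oner_eq0.
  have [b0|b_neq0] := eqVneq b 0.
    by move: aE_eq; rewrite b0 zeroE => /eqP; rewrite expf_eq0 E_gt0 (negbTE a_neq0).
  have : a / b \in [set v in Fq2x | v ^+ E == 1].
    rewrite inE exprMn exprVn aE_eq divff ?expf_neq0 // eqxx andbT.
    by apply/setIdP; rewrite GFM ?GFV ?mulf_neq0 ?invr_eq0.
  rewrite -powD_image => /imsetP[z /setIdP[zq2 z_neq0] zD].
  have := ker0 z zq2; rewrite /Lred exp2n_shift -zD mulrA (mulrC b) divfK //.
  by rewrite (addxx cardF) => /(_ erefl)/eqP; rewrite (negbTE z_neq0).
apply/eqP; apply: contraNT aE_neq => z_neq0.
have [b0|b_neq0] := eqVneq b 0.
  move: az; rewrite b0 mul0r => /eqP; rewrite mulf_eq0 (negbTE z_neq0) orbF => /eqP ->.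
  by rewrite eqxx.
move: az; rewrite exp2n_shift mulrA => /(mulIf z_neq0) ->.
by rewrite exprMn -exprM exp_DE // mulr1.
Qed.

Lemma chi_image_addsubgroup : addsubgroup (2 * m) [set u + u ^+ (2 ^ d) | u in Fq2].
Proof.
split.
- by apply/subsetP => _ /imsetP[u uq2 ->]; rewrite (GFD cardF) ?GFX.
- by apply/imsetP; exists 0; rewrite ?GF0 // exp2n0 addr0.
- move=> _ _ /imsetP[u uq2 ->] /imsetP[w wq2 ->]; apply/imsetP; exists (u + w).
    exact: (GFD cardF).
  by rewrite (exp2nD cardF) addrACA.
Qed.

Lemma perp_chi_image : perp (2 * m) [set u + u ^+ (2 ^ d) | u in Fq2] = GF F e.
Proof.
have m2_gt0 : (0 < 2 * m)%N by rewrite muln_gt0 m_gt0.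
(* By Frobenius invariance, v is orthogonal to all u + u^(2^d) iff
   v + v^(2^-d) is orthogonal to F_{q^2}. *)
apply/setP => v; apply/idP/idP => [/setIdP[vq2 /forall_inP orth]|ve].
  pose v' := v ^+ (2 ^ (2 * m - d)); have v'q2 : v' \in Fq2 by apply: GFX.
  have v'd : v' ^+ (2 ^ d) = v by rewrite -exp2n_add subnK ?(ltnW d_lt) ?(GF_exp2n vq2).
  have vv'_perp : {in Fq2, forall u, abstr (2 * m) ((v + v') * u) = 0}.
    move=> u uq2; have := eqP (orth _ (imset_f (fun u => u + u ^+ (2 ^ d)) uq2)).
    rewrite mulrDr mulrDl !(abstrD cardF) => <-; congr (_ + _).
    by rewrite -(abstr_exp2n cardF d) ?exprMn ?v'd // GFM.
  have vv'0 : v + v' = 0.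
    apply/eqP; apply: contraT => vv'_neq0.
    have [u uq2 Tu] := abstr_nondeg cardF m2_gt0 card_Fq2 (GFD cardF vq2 v'q2) vv'_neq0.
    by move: (vv'_perp u uq2); rewrite Tu => /eqP; rewrite oner_eq0.
  by apply: GF_shift => //; rewrite {1}(eq_of_addr_eq0 cardF vv'0) v'd.
have vq2 : v \in Fq2 by apply: GF_dvd ve; apply: dvdn_gcdr.
have vd : v ^+ (2 ^ d) = v by apply: GF_exp2n; apply: GF_dvd ve; apply: dvdn_gcdl.
apply/setIdP; split=> //; apply/forall_inP => _ /imsetP[u uq2 ->].
by rewrite mulrDr (abstrD cardF) -{2}vd -exprMn (abstr_exp2n cardF) ?(addxx cardF) // GFM.
Qed.

Lemma perp_scaled_Fq t v : t \in Fq2 -> t != 0 -> v \in Fq2 ->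
  (v \in perp (2 * m) [set c / t | c in Fq]) = ((v / t) ^+ (2 ^ m) == v / t).
Proof.
move=> tq2 t_neq0 vq2; have vtq2 : v / t \in GF F (m * 2) by rewrite mulnC GFM ?GFV.
have card_m2 : #|GF F (m * 2)| = (2 ^ (m * 2))%N by rewrite mulnC card_Fq2.
have trP := trace_eq0P cardF m_gt0 (isT : 0 < 2)%N card_m2 vtq2.
rewrite [(m * 2)%N]mulnC in trP.
have tr2 : trace m 2 (v / t) = v / t + (v / t) ^+ (2 ^ m).
  by rewrite /trace !big_ord_recl big_ord0 /= muln0 muln1 expn0 expr1 addr0.
have scale y : v * (y / t) = v / t * y by rewrite mulrA mulrAC.
apply/idP/idP => [/setIdP[_ /forall_inP orth]|/eqP vt_fixed].
  have : trace m 2 (v / t) = 0.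
    by apply/trP => y yq; rewrite -scale; apply/eqP/orth; apply: imset_f.
  by rewrite tr2 => /(eq_of_addr_eq0 cardF) <-.
apply/setIdP; split=> //; apply/forall_inP => _ /imsetP[c cq ->].
by rewrite scale; apply/eqP; apply: (trP.1 _ c cq); rewrite tr2 vt_fixed (addxx cardF).
Qed.

Lemma GFe_subset_perp_scaled t : t \in Fq2 -> t != 0 ->
  (GF F e \subset perp (2 * m) [set c / t | c in Fq]) = (t \in Fq) && (e %| m)%N.
Proof.
move=> tq2 t_neq0; have GFe_sub v : v \in GF F e -> v \in Fq2.
  by apply: GF_dvd; apply: dvdn_gcdr.
apply/idP/andP => [/subsetP sub|[tq em]]; last first.
  apply/subsetP => v ve; rewrite (perp_scaled_Fq tq2 t_neq0 (GFe_sub v ve)).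
  by rewrite exprMn exprVn (GF_exp2n tq) (GF_exp2n (GF_dvd em ve)).
have tq : t \in Fq.
  have := sub 1 (GF1 _ _); rewrite (perp_scaled_Fq tq2 t_neq0 (GF1 _ _)) !mul1r exprVn.
  by move/eqP/invr_inj; rewrite inGF => ->.
split=> //.
have e_gt0 : (0 < e)%N by rewrite gcdn_gt0 d_gt0.
have e_dvd_M : (e %| M)%N by apply: dvdn_trans dvd_2m_M; apply: dvdn_gcdr.
apply: (GF_subset_dvdn cardF e_gt0 M_gt0 e_dvd_M); apply/subsetP => v ve.
have := sub v ve; rewrite (perp_scaled_Fq tq2 t_neq0 (GFe_sub v ve)) exprMn exprVn.
rewrite (GF_exp2n tq).
by move/eqP/(mulIf (invr_neq0 t_neq0)); rewrite inGF => ->.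
Qed.

Lemma kernel_scale_FqE (a b z0 : F) : a \in Fq2 -> a != 0 -> b != 0 ->
  z0 \in Fq2 -> z0 != 0 -> Lred a b d z0 = 0 -> (e %| m)%N ->
  (a * z0 \in Fq) = (a ^+ ((2 ^ d * (2 ^ m - 1)) %/ g) == b ^+ ((2 ^ m - 1) %/ g)).
Proof.
move=> aq2 a_neq0 b_neq0 z0q2 z0_neq0 /(eq_of_addr_eq0 cardF) az0 em.
have aE : a = b * z0 ^+ D.
  by apply: (mulIf z0_neq0); rewrite az0 exp2n_shift mulrA.
set t := a * z0; have t_neq0 : t != 0 by rewrite mulf_neq0.
have g_dvd : (g %| 2 ^ m - 1)%N by apply: dvdn_exp2_sub1.
set Q := ((2 ^ m - 1) %/ g)%N; have QgE : (Q * g = 2 ^ m - 1)%N by rewrite divnK.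
have aD : a ^+ (2 ^ d) = b * t ^+ D.
  by rewrite exp2n_shift {2}aE mulrCA -exprMn.
rewrite -muln_divA // -/Q exprM aD exprMn -[X in _ == X]mulr1.
rewrite (inj_eq (mulfI (expf_neq0 Q b_neq0))).
have tDQ : (t ^+ D) ^+ Q = (t ^+ (2 ^ m - 1)) ^+ (D %/ g).
  by rewrite -!exprM -QgE {1}D_factor; congr (_ ^+ _); lia.
rewrite tDQ; apply/idP/eqP => [tq|uDg].
  by rewrite (eqP (_ : t ^+ (2 ^ m - 1) == 1)) ?expr1n // -GF_unitE.
have tq2 : t \in Fq2 by rewrite GFM.
apply: Fq_of_exp_sub1 => //; set u := t ^+ (2 ^ m - 1).
have uD : u ^+ D = 1 by rewrite D_factor exprM uDg expr1n.
apply: GF_dvd em _; apply: GF_shift; first exact: GFX.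
by rewrite exp2n_shift uD mul1r.
Qed.

Lemma Lred_image_kernel (a b z0 : F) : a \in Fq2 -> b \in Fq2 -> a != 0 -> b != 0 ->
  z0 \in Fq2 -> z0 != 0 -> Lred a b d z0 = 0 ->
  (Fq \subset Lred a b d @: Fq2)
    = (e %| m)%N && (a ^+ ((2 ^ d * (2 ^ m - 1)) %/ g) == b ^+ ((2 ^ m - 1) %/ g)).
Proof.
move=> aq2 bq2 a_neq0 b_neq0 z0q2 z0_neq0 Lz0.
set t := a * z0; have tq2 : t \in Fq2 by rewrite GFM.
have t_neq0 : t != 0 by rewrite mulf_neq0.
have bz0 : b * z0 ^+ (2 ^ d) = t by rewrite -(eq_of_addr_eq0 cardF Lz0).
have Lred_scale u : Lred a b d (z0 * u) = t * (u + u ^+ (2 ^ d)).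
  by rewrite /Lred exprMn !mulrA bz0 mulrDr.
have S1_grp : addsubgroup (2 * m) [set c / t | c in Fq].
  split.
  - by apply/subsetP => _ /imsetP[c cq ->]; rewrite GFM ?GFV // (subsetP Fq_subset_Fq2).
  - by apply/imsetP; exists 0; rewrite ?GF0 ?mul0r.
  - move=> _ _ /imsetP[c cq ->] /imsetP[c' c'q ->]; apply/imsetP; exists (c + c').
      exact: (GFD cardF).
    by rewrite mulrDl.
have m2_gt0 : (0 < 2 * m)%N by rewrite muln_gt0 m_gt0.
have -> : (Fq \subset Lred a b d @: Fq2)
    = ([set c / t | c in Fq] \subset [set u + u ^+ (2 ^ d) | u in Fq2]).
  apply/subsetP/subsetP => sub.
    move=> _ /imsetP[c cq ->]; have /imsetP[z zq2 ->] := sub c cq.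
    apply/imsetP; exists (z / z0); first by rewrite GFM ?GFV.
    have zE : Lred a b d z = t * (z / z0 + (z / z0) ^+ (2 ^ d)).
      by rewrite -Lred_scale mulrC divfK.
    by rewrite zE mulrC mulKf.
  move=> c cq; have /imsetP[u uq2 eu] := sub _ (imset_f (fun c => c / t) cq).
  apply/imsetP; exists (z0 * u); first exact: GFM.
  by rewrite Lred_scale -eu mulrC divfK.
rewrite (perp_subset cardF m2_gt0 card_Fq2 S1_grp chi_image_addsubgroup).
rewrite perp_chi_image GFe_subset_perp_scaled // andbC.
by apply: andb_id2l => em; apply: kernel_scale_FqE.
Qed.

Lemma Lred_kernel_nontrivial (a b : F) : a \in Fq2 -> b \in Fq2 -> ~~ (a ^+ E != b ^+ E) ->
  exists z0, [/\ z0 \in Fq2, z0 != 0 & Lred a b d z0 = 0].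
Proof.
move=> aq2 bq2 aE_eq.
have [/existsP[z0 /and3P[z0q2 z0_neq0 /eqP Lz0]]|no_ker] :=
  boolP [exists z, [&& z \in Fq2, z != 0 & Lred a b d z == 0]]; first by exists z0.
case/negP: aE_eq; apply/(Lred_injective_iff aq2 bq2) => z zq2 /eqP Lz.
by apply/eqP; apply: contraNT no_ker => z_neq0; apply/existsP; exists z; rewrite zq2 z_neq0.
Qed.

End FixedShift.

Lemma Lred_kernel_zero (a b z0 : F) d : z0 != 0 -> Lred a b d z0 = 0 -> (a == 0) = (b == 0).
Proof.
move=> z0_neq0 /(eq_of_addr_eq0 cardF) az0.
have w0_neq0 : z0 ^+ (2 ^ d) != 0 by rewrite exp2n_eq0.
apply/eqP/eqP => [a0|b0]; apply/eqP.
  by move: az0; rewrite a0 mul0r => /esym/eqP; rewrite mulf_eq0 (negbTE w0_neq0) orbF.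
by move: az0; rewrite b0 mul0r => /eqP; rewrite mulf_eq0 (negbTE z0_neq0) orbF.
Qed.

Lemma Lred_image_iff (a b : F) d : (0 < d)%N -> (d < 2 * m)%N ->
  let e := gcdn d (2 * m) in
  Fq \subset Lred a b d @: Fq2 <->
  [\/ [/\ d = m, a ^+ (2 ^ (2 * m)) != a, delta a b != 0,
          delta a b ^+ (2 ^ m) * (a ^+ (2 ^ (2 * m)) + a)
            + delta a b * (b ^+ (2 ^ (3 * m)) + b ^+ (2 ^ m)) = 0
        & delta a b ^+ (2 ^ m) * (b ^+ (2 ^ (2 * m)) + b)
            + delta a b * (a ^+ (2 ^ (3 * m)) + a ^+ (2 ^ m)) = 0],
      [/\ a ^+ (2 ^ (2 * m)) = a, b ^+ (2 ^ (2 * m)) = b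
        & a ^+ ((2 ^ (2 * m) - 1) %/ (2 ^ e - 1)) != b ^+ ((2 ^ (2 * m) - 1) %/ (2 ^ e - 1))]
    | [/\ (e %| m)%N, a ^+ (2 ^ (2 * m)) = a /\ a != 0, b ^+ (2 ^ (2 * m)) = b /\ b != 0
        & a ^+ ((2 ^ d * (2 ^ m - 1)) %/ (2 ^ e - 1)) = b ^+ ((2 ^ m - 1) %/ (2 ^ e - 1))]].
Proof.
move=> d_gt0 d_lt e.
have [/andP[aq2 bq2]|not_ab] := boolP ((a \in Fq2) && (b \in Fq2)); last first.
  have not_fixed : ~ (a ^+ (2 ^ (2 * m)) = a /\ b ^+ (2 ^ (2 * m)) = b).
    by case=> fa fb; move: not_ab; rewrite !inGF fa fb !eqxx.
  split=> [sub|[[dm _ delta_neq0 eqA eqB]|[fa fb _]|[_ [fa _] [fb _] _]]].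
  - have [dm a_notin delta_neq0 eqA eqB] := Lred_image_notin d_gt0 d_lt not_ab sub.
    by apply: Or31; split=> //; rewrite -inGF.
  - by rewrite dm; apply: Lred_image_delta.
  - by case: not_fixed.
  - by case: not_fixed.
have fa := GF_exp2n aq2; have fb := GF_exp2n bq2.
have [aE_neq|aE_eq] := boolP (a ^+ ((2 ^ (2 * m) - 1) %/ (2 ^ e - 1))
                               != b ^+ ((2 ^ (2 * m) - 1) %/ (2 ^ e - 1))).
  have ker0 := (Lred_injective_iff d_gt0 d_lt aq2 bq2).2 aE_neq.
  by split=> _; [apply: Or32; split | apply: Lred_image_inj].
have [z0 [z0q2 z0_neq0 Lz0]] := Lred_kernel_nontrivial d_gt0 d_lt aq2 bq2 aE_eq.
have [a0|a_neq0] := eqVneq a 0.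
  have b0 : b = 0 by apply/eqP; rewrite -(Lred_kernel_zero z0_neq0 Lz0) a0.
  (* [boolP] and [eqVneq] have turned [ne] into [false] and [na0] into [~~ true]. *)
  split=> [/subsetP/(_ 1 (GF1 _ _))/imsetP[z _]|[[_ na]|[_ _ ne]|[_ [_ na0]]]].
  - by rewrite /Lred a0 b0 !mul0r addr0 => /eqP; rewrite oner_eq0.
  - by rewrite fa eqxx in na.
  - by [].
  - by [].
have b_neq0 : b != 0 by rewrite -(Lred_kernel_zero z0_neq0 Lz0).
rewrite (Lred_image_kernel d_gt0 d_lt aq2 bq2 a_neq0 b_neq0 z0q2 z0_neq0 Lz0).
split=> [/andP[em /eqP rel]|[[_ na]|[_ _ ne]|[em _ _ ->]]].
- by apply: Or33; split.
- by rewrite fa eqxx in na.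
- by [].
- by rewrite em eqxx.
Qed.

End LredImage.

Unset Implicit Arguments.

Theorem mainTheorem11 (F : finFieldType) (m n k l : nat)
    (ck cl : nat -> F)
    (hm : (1 <= m)%N) (hn : ~~ odd n) (hF : #|F| = (2 ^ (m * n))%N)
    (hkl : (k < l)%N) (hl : (l < 2 * m)%N) :
  let q := (2 ^ m)%N in
  let e := gcdn (l - k) (2 * m) in
  let a := qlin m n ck 1 in
  let b := qlin m n cl 1 in
  let delta := a ^+ (q ^ 2) * b + a * b ^+ (q ^ 2) in
  (forall x : F, Tr2 m n (Ladj m n ck cl k l x) = 0 -> Tr m n x = 0)
  <->
  [\/ [/\ (l - k)%N = m, a ^+ (q ^ 2) != a, delta != 0,
          delta ^+ q * (a ^+ (q ^ 2) + a) + delta * (b ^+ (q ^ 3) + b ^+ q) = 0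
        & delta ^+ q * (b ^+ (q ^ 2) + b) + delta * (a ^+ (q ^ 3) + a ^+ q) = 0],
      [/\ a ^+ (q ^ 2) = a, b ^+ (q ^ 2) = b
        & a ^+ ((q ^ 2 - 1) %/ (2 ^ e - 1)) != b ^+ ((q ^ 2 - 1) %/ (2 ^ e - 1))]
    | [/\ (e %| m)%N, a ^+ (q ^ 2) = a /\ a != 0, b ^+ (q ^ 2) = b /\ b != 0
        & a ^+ ((2 ^ (l - k) * (q - 1)) %/ (2 ^ e - 1)) = b ^+ ((q - 1) %/ (2 ^ e - 1))]].
Proof.
have [h nE] : exists h, n = (2 * h)%N.
  by exists n./2; rewrite -{1}(odd_double_half n) (negbTE hn) mul2n.
subst n; clear hn; have h_gt0 : (0 < h)%N.
  by case: h hF => [|h] // cardF; have := finNzRing_gt1 F; rewrite cardF !muln0.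
have N_gt0 : (0 < m * (2 * h))%N by rewrite !muln_gt0 hm h_gt0.
have dvd_2m_N : (2 * m %| m * (2 * h))%N by rewrite mulnCA mulnA dvdn_mulr.
have d_gt0 : (0 < l - k)%N by rewrite subn_gt0.
have d_lt : (l - k < 2 * m)%N by rewrite (leq_ltn_trans (leq_subr _ _)).
move=> q e a b delta.
rewrite /delta /q -!expnM ![(m * _)%N]mulnC.
rewrite (Tr_ker_subset_iff hm h_gt0 hF ck cl hkl hl) (Lsub_image_Lred _ _ hkl hl).
exact: (Lred_image_iff hF N_gt0 hm dvd_2m_N a b d_gt0 d_lt).
Qed.
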